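(* Let $\alpha=(a,\alpha_1,\dots,\alpha_r,\varepsilon,\alpha_{r+2},\dots,\alpha_n)$ be an $\tilde{\mathbb N}$-composition, where $r\in\mathbb N$, $a,\alpha_1,\dots,\alpha_r$ are positive integers and $\alpha_{r+2},\dots,\alpha_n\in\{\varepsilon,1,2,\dots\}$. Let $I$ be the ideal of $\mathrm{WCQSym}$ generated by $B_\varepsilon=\{M_\gamma:\gamma\in\mathcal C_\varepsilon\}$. Then $$M_\alpha+M_{(a,\alpha_1,\dots,\alpha_r,\alpha_{r+2},\dots,\alpha_n)}\in I.$$
   Context: $\tilde{\mathbb N}=\mathbb N\cup\{\varepsilon\}$ with $0+\varepsilon=\varepsilon+\varepsilon=\varepsilon$ and $n+\varepsilon=n$ for integers $n\ge1$. $\mathbf{k}$ is a commutative ring containing $\mathbb Q$; $\mathbf{k}[[X]]_{\tilde{\mathbb N}}$, $X=\{x_1<x_2<\cdots\}$, is the algebra of possibly infinite linear combinations of formal monomials $\prod x_i^{f(x_i)}$ with $f$ finitely supported $\tilde{\mathbb N}$-valued, multiplied by adding exponents in $\tilde{\mathbb N}$. An $\tilde{\mathbb N}$-composition is a finite (possibly empty) sequence of elements of $\{\varepsilon,1,2,\dots\}$; $M_{(\gamma_1,\dots,\gamma_k)}=\sum_{1\le i_1<\cdots<i_k}x_{i_1}^{\gamma_1}\cdots x_{i_k}^{\gamma_k}$, $M_\emptyset=1$, and $\mathrm{WCQSym}$ is their $\mathbf k$-span, a subalgebra of $\mathbf{k}[[X]]_{\tilde{\mathbb N}}$. $\mathcal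 C_\varepsilon$ denotes the set of $\tilde{\mathbb N}$-compositions whose first entry is $\varepsilon$. *)

From Stdlib Require List.
From mathcomp Require Import all_boot all_order all_algebra.
Set Implicit Arguments. Unset Strict Implicit. Unset Printing Implicit Defensive.
Import GRing.Theory.
Local Open Scope ring_scope.

(* The monoid Ñ = N ∪ {ε}: [None] is ε, [Some n] is the integer n. *)
Definition Ntil := option nat.
Definition eps : Ntil := None.

Definition addNt (x y : Ntil) : Ntil :=
  match x, y with
  | Some m, Some n => Some (m + n)%N
  | None, None => None
  | None, Some 0 => None
  | None, Some n => Some n
  | Some 0, None => None
  | Some m, None => Some m
  end.

(* Monomials prod_i x_{i+1}^{f(x_{i+1})}, f finitely supported, encoded by the
   finite exponent sequence s (exponent of x_{i+1} is nth (Some 0) s i;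
   positions beyond size s have exponent 0). *)
Definition monomial := seq Ntil.

(* Elements of k[[X]]_Ñ: arbitrary coefficient functions on monomials.
   (Coefficient functions are only evaluated up to trailing zero exponents;
   all series below are insensitive to those.) *)
Definition series (k : Type) := monomial -> k.

(* candidates for summands: any x,y with addNt x y = s lie in this list *)
Definition candNt (s : Ntil) : seq Ntil :=
  match s with
  | None => [:: None; Some 0%N]
  | Some k => None :: [seq Some i | i <- iota 0 k.+1]
  end.

Definition decompNt (s : Ntil) : seq (Ntil * Ntil) :=
  [seq p <- [seq (x, y) | x <- candNt s, y <- candNt s] | addNt p.1 p.2 == s].

Fixpoint splits (s : monomial) : seq (monomial * monomial) :=
  match s with
  | [::] => [:: ([::], [::])]
  | x :: s' => [seq (p.1 :: q.1, p.2 :: q.2) | p <- decompNt x, q <- splits s']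
  end.

Section Ser.
Variable k : comNzRingType.

Definition addS (F G : series k) : series k := fun s => F s + G s.
Definition scaleS (c : k) (F : series k) : series k := fun s => c * F s.
Definition zeroS : series k := fun _ => 0.
Definition mulS (F G : series k) : series k :=
  fun s => \sum_(p <- splits s) F p.1 * G p.2.

Definition is_comp (g : seq Ntil) : bool := all (fun e => e != Some 0%N) g.

Definition in_Ceps (g : seq Ntil) : bool := is_comp g && (head (Some 0%N) g == eps).

(* M_γ = sum over i_1<...<i_k of x_{i_1}^{γ_1}...x_{i_k}^{γ_k}: the coefficient of
   a monomial is 1 iff its sequence of nonzero exponents (in variable order) is γ. *)
Definition Mser (g : seq Ntil) : series k :=
  fun s => if [seq e <- s | e != Some 0%N] == g then 1 else 0.

Definition in_WCQSym (F : series k) : Prop :=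
  exists L : seq (k * seq Ntil),
    all (fun p => is_comp p.2) L /\
    forall s, F s = foldr addS zeroS [seq scaleS p.1 (Mser p.2) | p <- L] s.

Definition in_ideal_Beps (F : series k) : Prop :=
  exists L : seq (series k * seq Ntil),
    List.Forall (fun p => in_WCQSym p.1) L /\
    all (fun p => in_Ceps p.2) L /\
    forall s, F s = foldr addS zeroS [seq mulS p.1 (Mser p.2) | p <- L] s.
End Ser.

(* The product of monomial quasi-symmetric series is given by quasi-shuffles:
   M_u M_v is the sum of the M_w over the quasi-shuffles w of u and v, in which
   letters that are merged are added in Ñ.  For words c, b, T let P(c, b, T) be
   the sum of the M_(c w) over the quasi-shuffles w of b and εT plus the sum of
   the M_(c w) over the quasi-shuffles w of b and T, so that P(c, [], T) is
   M_(c ε T) + M_(c T).  Since a + ε = a for a positive integer a, expanding the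
   first letters gives
     P(a, b, T) = M_(a b) M_(ε T) - Σ_{w ∈ ab ⧢ T} M_(ε w),
     P(c x, b, T) = P(c, x b, T) - Σ_{w ∈ xb ⧢ T} P(c, [], w),
   and induction on the length of c puts every P(c, b, T) in the ideal. *)
From mathcomp Require Import all_boot all_order all_algebra.
From mathcomp Require Import zify.
Set Implicit Arguments. Unset Strict Implicit. Unset Printing Implicit Defensive.
Import GRing.Theory.
Local Open Scope ring_scope.

Local Notation nt0 := (Some 0%N).

Lemma add0Nt x : addNt nt0 x = x.
Proof. by case: x => [[|n]|]. Qed.

Lemma addNt0 x : addNt x nt0 = x.
Proof. by case: x => [[|n]|] //=; rewrite addn0. Qed.

Lemma addNt_neq0 x y : x != nt0 -> y != nt0 -> addNt x y != nt0.
Proof. by case: x => [[|m]|]; case: y => [[|n]|]. Qed.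

Definition posNt (x : Ntil) : bool := if x is Some n then (0 < n)%N else false.

Lemma addNt_eps x : posNt x -> addNt x eps = x.
Proof. by case: x => [[|n]|]. Qed.

Lemma posNt_comp c : all posNt c -> is_comp c.
Proof. by apply: sub_all => -[[|n]|]. Qed.

Lemma mem_candNt x p q : addNt p q = x -> (p \in candNt x) && (q \in candNt x).
Proof.
have candNt_eps z : eps \in candNt z by case: z => [?|]; rewrite /candNt mem_head.
have candNt_Some i n : (Some i \in candNt (Some n)) = (i <= n)%N.
  by rewrite /candNt in_cons (mem_map (@Some_inj _)) mem_iota add0n ltnS.
case: p => [[|m]|]; case: q => [[|n]|] <-;
  rewrite [addNt _ _]/= ?candNt_eps ?candNt_Some //=; try lia.
all: by rewrite /candNt !in_cons.
Qed.

Lemma mem_decompNt x pq : (pq \in decompNt x) = (addNt pq.1 pq.2 == x).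
Proof.
rewrite /decompNt mem_filter; case: eqP => //= /mem_candNt.
by case: pq => p q /andP[p_in q_in]; apply: allpairs_f.
Qed.

Lemma uniq_decompNt x : uniq (decompNt x).
Proof.
have uniq_candNt : uniq (candNt x).
  case: x => [n|] //; rewrite /candNt cons_uniq (map_inj_uniq (@Some_inj _)).
  by rewrite iota_uniq andbT; apply/mapP => -[].
rewrite /decompNt filter_uniq // allpairs_uniq //.
by move=> [? ?] [? ?] _ _ /= [-> ->].
Qed.

Lemma decompNt0 : decompNt nt0 = [:: (nt0, nt0)].
Proof. by []. Qed.

Lemma perm_decompNt x : x != nt0 -> perm_eq (decompNt x)
  [:: (nt0, x), (x, nt0) & [seq pq <- decompNt x | (pq.1 != nt0) && (pq.2 != nt0)]].
Proof.
move=> x0; apply: uniq_perm.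
- exact: uniq_decompNt.
- rewrite /= !in_cons !mem_filter /= !andbF orbF xpair_eqE eq_sym (negPf x0) /=.
  by rewrite filter_uniq ?uniq_decompNt.
move=> [p q]; rewrite mem_decompNt !in_cons mem_filter mem_decompNt !xpair_eqE /=.
have [->|p0] := eqVneq p nt0; first by rewrite add0Nt /= (eq_sym nt0) (negPf x0) !orbF.
have [->|q0] := eqVneq q nt0; first by rewrite addNt0 /= andbT orbF.
by rewrite /= andbF.
Qed.

Fixpoint qshuffle (u v : seq Ntil) {struct u} : seq (seq Ntil) :=
  match u with
  | [::] => [:: v]
  | x :: u' =>
    let fix qshuffle_u (v : seq Ntil) : seq (seq Ntil) :=
      match v with
      | [::] => [:: u]
      | y :: v' => map (cons x) (qshuffle u' v) ++ map (cons y) (qshuffle_u v')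
                   ++ map (cons (addNt x y)) (qshuffle u' v')
      end in qshuffle_u v
  end.

Lemma qshuffle_nil v : qshuffle [::] v = [:: v].
Proof. by []. Qed.

Lemma qshuffle_cons_nil x u : qshuffle (x :: u) [::] = [:: x :: u].
Proof. by []. Qed.

Lemma qshuffle_cons x u y v : qshuffle (x :: u) (y :: v) =
  map (cons x) (qshuffle u (y :: v)) ++ map (cons y) (qshuffle (x :: u) v)
  ++ map (cons (addNt x y)) (qshuffle u v).
Proof. by []. Qed.

Lemma qshuffle_comp u v w : is_comp u -> is_comp v -> w \in qshuffle u v -> is_comp w.
Proof.
elim: u v w => [|x u IHu] v w cu cv; first by rewrite mem_seq1 => /eqP ->.
move: (cu) => /andP[x0 cu'].
elim: v cv w => [|y v IHv] cv w; first by rewrite mem_seq1 => /eqP ->.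
move: (cv) => /andP[y0 cv'].
rewrite !mem_cat => /or3P[] /mapP[w' w'_in ->] /=.
- by rewrite x0 (IHu (y :: v)).
- by rewrite y0 (IHv cv').
- by rewrite addNt_neq0 // (IHu v).
Qed.

Lemma sumr_pred1_uniq (R : pzSemiRingType) (T : eqType) (l : seq T) a (c : R) :
  uniq l -> \sum_(z <- l) (z == a)%:R * c = (a \in l)%:R * c.
Proof.
move=> l_uniq; have [a_in|a_notin] := boolP (a \in l).
  rewrite (bigD1_seq a) //= eqxx mul1r big1 ?addr0 // => z.
  by move=> /negPf->; rewrite mul0r.
rewrite mul0r big1_seq // => z /= z_in.
by rewrite (negPf (memPn a_notin z z_in)) mul0r.
Qed.

Section Series.
Variable k : comNzRingType.

Definition shiftS (x : Ntil) (F : series k) : series k := fun t => F (x :: t).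

Definition sumM (W : seq (seq Ntil)) : series k := fun s => \sum_(w <- W) Mser k w s.

Lemma eq_mulS (F F' G G' : series k) s : F =1 F' -> G =1 G' -> mulS F G s = mulS F' G' s.
Proof. by move=> eqF eqG; apply: eq_bigr => pq _; rewrite eqF eqG. Qed.

Lemma mulS_scalel c (F G : series k) s : mulS (scaleS c F) G s = c * mulS F G s.
Proof. by rewrite /mulS mulr_sumr; apply: eq_bigr => pq _; rewrite mulrA. Qed.

Lemma mulS_scaler c (F G : series k) s : mulS F (scaleS c G) s = c * mulS F G s.
Proof. by rewrite /mulS mulr_sumr; apply: eq_bigr => pq _; rewrite mulrCA. Qed.

Lemma mulNS (F G : series k) s : mulS (fun t => - F t) G s = - mulS F G s.
Proof. by rewrite /mulS -sumrN; apply: eq_bigr => pq _; rewrite mulNr. Qed.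

Lemma mul0S (G : series k) s : mulS (zeroS k) G s = 0.
Proof. by rewrite /mulS big1 // => pq _; rewrite mul0r. Qed.

Lemma mulS0 (F : series k) s : mulS F (zeroS k) s = 0.
Proof. by rewrite /mulS big1 // => pq _; rewrite mulr0. Qed.

Lemma mulS_nil (F G : series k) : mulS F G [::] = F [::] * G [::].
Proof. by rewrite /mulS big_seq1. Qed.

Lemma mulS_cons (F G : series k) x s : mulS F G (x :: s) =
  \sum_(pq <- decompNt x) mulS (shiftS pq.1 F) (shiftS pq.2 G) s.
Proof. by rewrite /mulS /= big_allpairs_dep. Qed.

Lemma mulS_cons0 (F G : series k) s :
  mulS F G (nt0 :: s) = mulS (shiftS nt0 F) (shiftS nt0 G) s.
Proof. by rewrite mulS_cons decompNt0 big_seq1. Qed.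

Lemma mulS_cons_neq0 (F G : series k) x s : x != nt0 -> mulS F G (x :: s) =
  mulS (shiftS nt0 F) (shiftS x G) s + mulS (shiftS x F) (shiftS nt0 G) s
  + \sum_(pq <- decompNt x | (pq.1 != nt0) && (pq.2 != nt0))
      mulS (shiftS pq.1 F) (shiftS pq.2 G) s.
Proof.
move=> x0; rewrite mulS_cons (perm_big _ (perm_decompNt x0)) !big_cons big_filter.
exact: addrA.
Qed.

Lemma Mser_shift0 w : shiftS nt0 (Mser k w) =1 Mser k w.
Proof. by []. Qed.

Lemma Mser_shift_nil x : x != nt0 -> shiftS x (Mser k [::]) =1 zeroS k.
Proof. by move=> x0 t; rewrite /shiftS /Mser /= x0. Qed.

Lemma Mser_shift_cons z w x : x != nt0 ->
  shiftS x (Mser k (z :: w)) =1 scaleS (z == x)%:R (Mser k w).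
Proof.
move=> x0 t; rewrite /shiftS /scaleS /Mser /= x0 eqseq_cons (eq_sym x).
by case: (z == x); rewrite ?mul1r ?mul0r.
Qed.

Lemma mul1S (G : series k) s : mulS (Mser k [::]) G s = G s.
Proof.
elim: s G => [|x s IH] G; first by rewrite mulS_nil mul1r.
have [->|x0] := eqVneq x nt0.
  by rewrite mulS_cons0 (eq_mulS _ (Mser_shift0 _) (frefl _)) IH.
rewrite mulS_cons_neq0 // (eq_mulS _ (Mser_shift0 _) (frefl _)) IH.
rewrite (eq_mulS _ (Mser_shift_nil x0) (frefl _)) mul0S big1 ?addr0 // => -[p q] /andP[p0 _].
by rewrite (eq_mulS _ (Mser_shift_nil p0) (frefl _)) mul0S.
Qed.

Lemma mulS1 (F : series k) s : mulS F (Mser k [::]) s = F s.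
Proof.
elim: s F => [|x s IH] F; first by rewrite mulS_nil mulr1.
have [->|x0] := eqVneq x nt0.
  by rewrite mulS_cons0 (eq_mulS _ (frefl _) (Mser_shift0 _)) IH.
rewrite mulS_cons_neq0 // (eq_mulS _ (frefl _) (Mser_shift0 _)) IH.
rewrite (eq_mulS _ (frefl _) (Mser_shift_nil x0)) mulS0 big1 ?add0r ?addr0 //.
by move=> -[p q] /andP[_ q0]; rewrite (eq_mulS _ (frefl _) (Mser_shift_nil q0)) mulS0.
Qed.

Lemma sumM_cat W1 W2 s : sumM (W1 ++ W2) s = sumM W1 s + sumM W2 s.
Proof. exact: big_cat. Qed.

Lemma sumM_seq1 w : sumM [:: w] =1 Mser k w.
Proof. by move=> s; rewrite /sumM big_seq1. Qed.

Lemma sumM_cons_nil z W : sumM [seq z :: w | w <- W] [::] = 0.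
Proof. by rewrite /sumM big_map big1. Qed.

Lemma sumM_cons_neq0 z W x s : x != nt0 ->
  sumM [seq z :: w | w <- W] (x :: s) = (z == x)%:R * sumM W s.
Proof.
move=> x0; rewrite /sumM big_map mulr_sumr.
by apply: eq_bigr => w _; apply: Mser_shift_cons.
Qed.

Lemma sum_decompNt_Mser_cons x x1 y1 u v s : x1 != nt0 -> y1 != nt0 ->
  \sum_(pq <- decompNt x | (pq.1 != nt0) && (pq.2 != nt0))
     mulS (shiftS pq.1 (Mser k (x1 :: u))) (shiftS pq.2 (Mser k (y1 :: v))) s
  = (addNt x1 y1 == x)%:R * mulS (Mser k u) (Mser k v) s.
Proof.
move=> x10 y10; rewrite -big_filter.
rewrite (eq_big_seq (fun pq => (pq == (x1, y1))%:R * mulS (Mser k u) (Mser k v) s)).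
  rewrite sumr_pred1_uniq; last exact: filter_uniq (uniq_decompNt x).
  by rewrite mem_filter /= x10 y10 mem_decompNt.
move=> [p q]; rewrite mem_filter /= => /andP[/andP[p0 q0] _].
rewrite (eq_mulS _ (Mser_shift_cons _ _ p0) (Mser_shift_cons _ _ q0)).
by rewrite mulS_scalel mulS_scaler mulrA -natrM mulnb xpair_eqE !(eq_sym x1) !(eq_sym y1).
Qed.

Lemma mulS_Mser u v : is_comp u -> is_comp v ->
  mulS (Mser k u) (Mser k v) =1 sumM (qshuffle u v).
Proof.
move=> + + s; elim: s u v => [|x s IH] [|x1 u] [|y1 v] cu cv;
  rewrite ?qshuffle_nil ?qshuffle_cons_nil ?sumM_seq1 ?mul1S ?mulS1 //.
  by rewrite mulS_nil qshuffle_cons !sumM_cat !sumM_cons_nil mul0r !addr0.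
move: (cu) (cv) => /andP[x10 cu'] /andP[y10 cv'].
have [->|x0] := eqVneq x nt0.
  by rewrite mulS_cons0 (eq_mulS _ (Mser_shift0 _) (Mser_shift0 _)) IH.
rewrite mulS_cons_neq0 // sum_decompNt_Mser_cons //.
rewrite (eq_mulS _ (Mser_shift0 _) (Mser_shift_cons _ _ x0)) mulS_scaler.
rewrite (eq_mulS _ (Mser_shift_cons _ _ x0) (Mser_shift0 _)) mulS_scalel.
rewrite qshuffle_cons !sumM_cat !sumM_cons_neq0 // !IH //.
by rewrite addrA (addrC (_ * sumM _ s)).
Qed.

Lemma foldr_addS (l : seq (series k)) s :
  foldr (@addS k) (zeroS k) l s = \sum_(F <- l) F s.
Proof. by elim: l => [|F l IH]; rewrite ?big_nil ?big_cons //= /addS IH. Qed.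

Lemma eq_in_ideal_Beps (F G : series k) : F =1 G -> in_ideal_Beps G -> in_ideal_Beps F.
Proof.
move=> eqFG [L [L_WCQSym [L_Ceps EG]]]; exists L; do 2!split=> //.
by move=> s; rewrite eqFG EG.
Qed.

Lemma in_ideal_BepsD (F G : series k) :
  in_ideal_Beps F -> in_ideal_Beps G -> in_ideal_Beps (addS F G).
Proof.
move=> [L1 [L1_WCQSym [L1_Ceps EF]]] [L2 [L2_WCQSym [L2_Ceps EG]]].
exists (L1 ++ L2); split; first exact/List.Forall_app.
split=> [|s]; first by rewrite all_cat L1_Ceps L2_Ceps.
by rewrite /addS EF EG !foldr_addS map_cat big_cat.
Qed.

Lemma in_WCQSymN (F : series k) : in_WCQSym F -> in_WCQSym (fun s => - F s).
Proof.
move=> [L [L_comp EF]]; exists [seq (- p.1, p.2) | p <- L].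
split=> [|s]; first by rewrite all_map.
by rewrite EF !foldr_addS !big_map -sumrN; apply: eq_bigr => p _; rewrite /scaleS mulNr.
Qed.

Lemma in_ideal_BepsN (F : series k) : in_ideal_Beps F -> in_ideal_Beps (fun s => - F s).
Proof.
move=> [L [L_WCQSym [L_Ceps EF]]].
exists [seq ((fun s => - p.1 s) : series k, p.2) | p <- L]; split.
  elim: L_WCQSym {L_Ceps EF} => [|p l p_WCQSym _ IH] /=; constructor=> //.
  exact: in_WCQSymN.
split=> [|s]; first by rewrite all_map.
by rewrite EF !foldr_addS !big_map -sumrN; apply: eq_bigr => p _; rewrite mulNS.
Qed.

Lemma in_ideal_BepsB (F G : series k) : in_ideal_Beps F -> in_ideal_Beps G ->
  in_ideal_Beps (fun s => F s - G s).
Proof. by move=> IF /in_ideal_BepsN IG; apply: in_ideal_BepsD. Qed.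

Lemma in_ideal_Beps_sum (T : eqType) (l : seq T) (F : T -> series k) :
  (forall w, w \in l -> in_ideal_Beps (F w)) ->
  in_ideal_Beps (fun s => \sum_(w <- l) F w s).
Proof.
elim: l => [|w l IH] IF.
  by exists [::]; do 2!split=> //; move=> s; rewrite big_nil.
apply: (@eq_in_ideal_Beps _ (addS (F w) (fun s => \sum_(v <- l) F v s))) => [s|].
  by rewrite big_cons.
apply: in_ideal_BepsD; first by apply: IF; rewrite mem_head.
by apply: IH => v v_in; apply: IF; rewrite in_cons v_in orbT.
Qed.

Lemma in_ideal_Beps_mulS b g : is_comp b -> in_Ceps g ->
  in_ideal_Beps (mulS (Mser k b) (Mser k g)).
Proof.
move=> b_comp g_Ceps; exists [:: (Mser k b, g)]; split.
  constructor; last by constructor.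
  exists [:: (1, b)]; split=> [|s]; first by rewrite /= b_comp.
  by rewrite /= /addS /scaleS /zeroS mul1r addr0.
by split=> [|s]; rewrite /= ?g_Ceps /addS /zeroS ?addr0.
Qed.

Lemma in_ideal_Beps_Mser g : in_Ceps g -> in_ideal_Beps (Mser k g).
Proof.
move=> g_Ceps; apply: (@eq_in_ideal_Beps _ (mulS (Mser k [::]) (Mser k g))) => [s|].
  by rewrite mul1S.
exact: in_ideal_Beps_mulS.
Qed.

Definition epsPair (c b T : seq Ntil) : series k :=
  addS (sumM [seq c ++ w | w <- qshuffle b (eps :: T)])
       (sumM [seq c ++ w | w <- qshuffle b T]).

Lemma epsPair_nil c T :
  epsPair c [::] T =1 addS (Mser k (c ++ eps :: T)) (Mser k (c ++ T)).
Proof. by move=> s; rewrite /epsPair /addS !sumM_seq1. Qed.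

Lemma epsPair_seq1 a b T : posNt a -> is_comp (a :: b) -> is_comp T ->
  epsPair [:: a] b T =1 fun s => mulS (Mser k (a :: b)) (Mser k (eps :: T)) s
                                 - sumM [seq eps :: w | w <- qshuffle (a :: b) T] s.
Proof.
move=> a_pos ab_comp T_comp s; rewrite mulS_Mser //.
by rewrite qshuffle_cons addNt_eps // !sumM_cat addrCA addrC addrK.
Qed.

Lemma epsPair_rcons c x b T : posNt x ->
  epsPair (rcons c x) b T =1 fun s =>
    epsPair c (x :: b) T s - \sum_(w <- qshuffle (x :: b) T) epsPair c [::] w s.
Proof.
move=> x_pos s; apply/eqP; rewrite eq_sym subr_eq; apply/eqP.
under eq_bigr do rewrite epsPair_nil.
rewrite /epsPair /addS big_split qshuffle_cons addNt_eps // !map_cat -!map_comp !sumM_cat.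
rewrite /sumM !big_map.
under [in RHS]eq_bigr do rewrite cat_rcons.
under [X in _ = _ + X + _]eq_bigr do rewrite cat_rcons.
by rewrite -!addrA; congr (_ + _); rewrite addrCA.
Qed.

Lemma epsPair_in_ideal a c b T : posNt a -> all posNt c -> all posNt b -> is_comp T ->
  in_ideal_Beps (epsPair (a :: c) b T).
Proof.
move=> a_pos; elim/last_ind: c b T => [|c x IH] b T.
  move=> _ b_pos T_comp.
  have ab_comp : is_comp (a :: b) by apply: posNt_comp; rewrite /= a_pos.
  apply: eq_in_ideal_Beps (epsPair_seq1 a_pos ab_comp T_comp) _.
  apply: in_ideal_BepsB; first by apply: in_ideal_Beps_mulS; rewrite /in_Ceps /= ?T_comp.
  apply: in_ideal_Beps_sum => _ /mapP[w w_in ->]; apply: in_ideal_Beps_Mser.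
  by rewrite /in_Ceps /= andbT (qshuffle_comp ab_comp T_comp w_in).
rewrite all_rcons => /andP[x_pos c_pos] b_pos T_comp.
apply: eq_in_ideal_Beps (epsPair_rcons (a :: c) b T x_pos) _.
apply: in_ideal_BepsB; first by apply: IH => //=; rewrite x_pos.
apply: in_ideal_Beps_sum => w w_in; apply: IH => //.
by apply: qshuffle_comp w_in => //; apply: posNt_comp; rewrite /= x_pos.
Qed.

End Series.

Theorem lemma3p10 (k : comUnitRingType)
  (hQ : forall n : nat, (n.+1)%:R \is a @GRing.unit k)
  (a : nat) (alphas : seq nat) (tail : seq Ntil)
  (ha : (0 < a)%N) (halphas : all (fun x => (0 < x)%N) alphas)
  (htail : is_comp tail) :
  in_ideal_Beps
    (addS (Mser k (Some a :: [seq Some x | x <- alphas] ++ eps :: tail))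
          (Mser k (Some a :: [seq Some x | x <- alphas] ++ tail))).
Proof.
pose c := Some a :: [seq Some x | x <- alphas].
apply: (@eq_in_ideal_Beps _ _ (epsPair k c [::] tail)) => [s|].
  by rewrite epsPair_nil.
by apply: epsPair_in_ideal; rewrite ?all_map.
Qed.
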